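(* Let $C$ be a coalgebra over a field. If $C$ is left quasi-co-Frobenius, then $C^*$ is left Rat-Kasch.
   Context: Every right $C$-comodule $M$ is a left $C^*$-module via $f\rightharpoonup m=\sum m_0f(m_1)$; the left $C^*$-modules arising this way are called rational, and rational left $C^*$-modules are the same as right $C$-comodules. In particular $C$ is a left (and similarly right) $C^*$-module. $C$ is left quasi-co-Frobenius (left QcF) if $C$, as a left $C^*$-module, embeds in a direct product of copies of $C^*$ (equivalently, $C$ is projective as a right $C$-comodule). $C^*$ is left Rat-Kasch if every simple rational left $C^*$-module embeds in $C^*$ as a left $C^*$-module. *)

(* Since MathComp has no tensor product of arbitrary vector spaces, an element
   of V (x) W is represented by a finite list of pairs  sum_i v_i (x) w_i ,
   and identities between tensors are tested against all f (x) g with f, g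
   linear functionals (over a field these separate points of V (x) W). *)
From HB Require Import structures.
From mathcomp Require Import all_boot all_order all_algebra.
Set Implicit Arguments. Unset Strict Implicit. Unset Printing Implicit Defensive.
Import GRing.Theory.
Local Open Scope ring_scope.

Section Coalg.
Variable k : fieldType.

Definition lin (V : lmodType k) (f : V -> k) : Prop :=
  forall (a : k) (x y : V), f (a *: x + y) = a * f x + f y.

Definition tev (V W : lmodType k) (f : V -> k) (g : W -> k) (t : seq (V * W)) : k :=
  \sum_(p <- t) f p.1 * g p.2.

Record is_coalgebra (C : lmodType k) (Delta : C -> seq (C * C)) (eps : C -> k)
  : Prop := {
  coalg_eps_lin : lin eps;
  coalg_Delta_lin : forall (a : k) (x y : C) (f g : C -> k), lin f -> lin g ->
    tev f g (Delta (a *: x + y)) = a * tev f g (Delta x) + tev f g (Delta y);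
  coalg_coassoc : forall (f g h : C -> k), lin f -> lin g -> lin h -> forall c : C,
    \sum_(p <- Delta c) tev f g (Delta p.1) * h p.2
    = \sum_(p <- Delta c) f p.1 * tev g h (Delta p.2);
  coalg_counit_l : forall c : C, \sum_(p <- Delta c) eps p.1 *: p.2 = c;
  coalg_counit_r : forall c : C, \sum_(p <- Delta c) eps p.2 *: p.1 = c }.

Record is_rcomodule (C : lmodType k) (Delta : C -> seq (C * C)) (eps : C -> k)
  (M : lmodType k) (rho : M -> seq (M * C)) : Prop := {
  comod_rho_lin : forall (a : k) (x y : M) (f : M -> k) (g : C -> k), lin f -> lin g ->
    tev f g (rho (a *: x + y)) = a * tev f g (rho x) + tev f g (rho y);
  comod_coassoc : forall (f : M -> k) (g h : C -> k), lin f -> lin g -> lin h ->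
    forall m : M,
    \sum_(p <- rho m) tev f g (rho p.1) * h p.2
    = \sum_(p <- rho m) f p.1 * tev g h (Delta p.2);
  comod_counit : forall m : M, \sum_(p <- rho m) eps p.2 *: p.1 = m }.

Definition conv (C : lmodType k) (Delta : C -> seq (C * C)) (f g : C -> k) : C -> k :=
  fun c => \sum_(p <- Delta c) f p.1 * g p.2.

Definition ract (C M : lmodType k) (rho : M -> seq (M * C)) (f : C -> k) (m : M) : M :=
  \sum_(p <- rho m) f p.2 *: p.1.

(* C is left QcF: C, as a left C^*-module (via f -> c = sum c_1 f(c_2)),
   embeds (injective C^*-module map) in a direct product C^*^I. *)
Definition left_QcF (C : lmodType k) (Delta : C -> seq (C * C)) : Prop :=
  exists (I : Type) (phi : C -> I -> C -> k),
    (forall c i, lin (phi c i)) /\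
    (forall x y i d, phi (x + y) i d = phi x i d + phi y i d) /\
    (forall f c i d, lin f -> phi (ract Delta f c) i d = conv Delta f (phi c i) d) /\
    (forall c, (forall i d, phi c i d = 0) -> c = 0).

Definition rsubmodule (C M : lmodType k) (rho : M -> seq (M * C)) (S : M -> Prop) : Prop :=
  S 0 /\ (forall x y, S x -> S y -> S (x - y)) /\
  (forall f m, lin f -> S m -> S (ract rho f m)).

Definition rsimple (C M : lmodType k) (rho : M -> seq (M * C)) : Prop :=
  (exists m : M, m <> 0) /\
  forall S, rsubmodule rho S -> (forall m, S m -> m = 0) \/ (forall m, S m).

(* C^* is left Rat-Kasch: every simple rational left C^*-module embeds in C^* *)
Definition left_RatKasch (C : lmodType k) (Delta : C -> seq (C * C)) (eps : C -> k)
  : Prop :=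
  forall (M : lmodType k) (rho : M -> seq (M * C)),
    is_rcomodule Delta eps rho -> rsimple rho ->
    exists psi : M -> C -> k,
      (forall m, lin (psi m)) /\
      (forall x y d, psi (x + y) d = psi x d + psi y d) /\
      (forall f m d, lin f -> psi (ract rho f m) d = conv Delta f (psi m) d) /\
      (forall m, (forall d, psi m d = 0) -> m = 0).

End Coalg.

(* Pick a linear functional f on M with f(m0) = 1 for some m0 != 0 (it exists by
   Zorn's lemma, extending f from the line k m0).  Then theta : m |-> sum f(m_0) m_1
   is a morphism of right comodules M -> C with eps (theta m) = f m, so theta != 0.
   Composing with the embedding C -> C^*^I and a coordinate on which theta(m0) is
   nonzero gives a nonzero C^*-linear map M -> C^*, injective since M is simple. *)
From mathcomp Require Import all_boot all_order all_algebra.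
From mathcomp Require Import boolp classical_sets.
Set Implicit Arguments. Unset Strict Implicit. Unset Printing Implicit Defensive.
Import GRing.Theory.
Local Open Scope ring_scope.

Section LinearFunctionals.
Variables (k : fieldType) (V : lmodType k).

Lemma additive0 (Z Z' : zmodType) (h : Z -> Z') :
  (forall x y, h (x + y) = h x + h y) -> h 0 = 0.
Proof. by move=> hD; apply: (@addrI _ (h 0)); rewrite -hD !addr0. Qed.

Lemma linD (f : V -> k) x y : lin f -> f (x + y) = f x + f y.
Proof. by move=> lf; have := lf 1 x y; rewrite scale1r mul1r. Qed.

Lemma lin0 (f : V -> k) : lin f -> f 0 = 0.
Proof. by move=> lf; apply: additive0 => x y; exact: linD. Qed.

Lemma lin_sum (T : Type) (f : V -> k) (s : seq T) (a : T -> k) (F : T -> V) :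
  lin f -> f (\sum_(p <- s) a p *: F p) = \sum_(p <- s) a p * f (F p).
Proof.
move=> lf; elim: s => [|p s IH]; first by rewrite !big_nil lin0.
by rewrite !big_cons -IH lf.
Qed.

End LinearFunctionals.

Section FunctionalExtension.
Variables (k : fieldType) (V : lmodType k) (v : V).
Hypothesis v_neq0 : v != 0.

(* Partial functionals are given by their graphs, so that the union of a chain
   is again one without choosing values. *)
Record partial_functional := PartialFunctional {
  graph : V -> k -> Prop;
  graph_comb : forall a x y b c, graph x b -> graph y c -> graph (a *: x + y) (a * b + c);
  graph_functional : forall x b c, graph x b -> graph x c -> b = c;
  graph_v : graph v 1 }.

Definition pf_le (s t : partial_functional) := forall x b, graph s x b -> graph t x b.

Definition pf_dom (s : partial_functional) x := exists b, graph s x b.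

Lemma graph0 s : graph s 0 0.
Proof.
by have := graph_comb (-1) (graph_v s) (graph_v s); rewrite scaleN1r addNr mulN1r addNr.
Qed.

Definition span_v_functional : partial_functional.
Proof.
refine (@PartialFunctional (fun y b => y = b *: v) _ _ _).
- by move=> a _ _ b c -> ->; rewrite scalerDl scalerA.
- move=> _ b c ->; move/eqP; rewrite -subr_eq0 -scalerBl scaler_eq0.
  by rewrite (negPf v_neq0) orbF subr_eq0 => /eqP.
- by rewrite scale1r.
Defined.

Lemma pf_extend s x : ~ pf_dom s x -> exists2 t, pf_le s t & pf_dom t x.
Proof.
move=> x_notin.
pose G y b := exists a w, graph s w b /\ y = w + a *: x.
have G_comb a y z b c : G y b -> G z c -> G (a *: y + z) (a * b + c).
  move=> [a1 [w1 [gw1 ->]]] [a2 [w2 [gw2 ->]]].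
  exists (a * a1 + a2), (a *: w1 + w2); split; first exact: graph_comb.
  by rewrite scalerDr scalerDl scalerA addrACA.
have G_functional y b c : G y b -> G y c -> b = c.
  move=> [a1 [w1 [gw1 ->]]] [a2 [w2 [gw2 /eqP]]].
  have [<-|a12] := eqVneq a1 a2.
    by move/eqP/addIr => ew; apply: graph_functional gw2; rewrite -ew.
  (* otherwise x = (a1 - a2)^-1 (w2 - w1) would lie in the domain of s *)
  move/eqP=> E; have ex : (a1 - a2) *: x = (-1) *: w1 + w2.
    by rewrite scalerBl scaleN1r -[a1 *: x](addKr w1) E addrA addrK.
  case: x_notin; exists ((a1 - a2)^-1 * (-1 * b + c)).
  have -> : x = (a1 - a2)^-1 *: ((-1) *: w1 + w2) + 0.
    by rewrite -ex scalerA mulVf ?scale1r ?addr0 // subr_eq0.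
  by rewrite -[_ * _]addr0; apply: graph_comb (graph0 s); apply: graph_comb.
have G_v : G v 1 by exists 0, v; rewrite scale0r addr0; split=> //; exact: graph_v.
exists (PartialFunctional G_comb G_functional G_v).
  by move=> y b gy; exists 0, y; rewrite scale0r addr0.
by exists 0, 1, 0; rewrite add0r scale1r; split=> //; exact: graph0.
Qed.

Lemma pf_chain_ub (A : set partial_functional) :
  total_on A pf_le -> (exists s, A s) -> exists t, forall s, A s -> pf_le s t.
Proof.
move=> A_total [s0 As0].
pose G y b := exists2 s, A s & graph s y b.
have common s t y z b c : A s -> A t -> graph s y b -> graph t z c ->
    exists u, [/\ A u, graph u y b & graph u z c].
  move=> As At gy gz; have [st|ts] := A_total s t As At.
    by exists t; split=> //; exact: st.
  by exists s; split=> //; exact: ts.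
have G_comb a y z b c : G y b -> G z c -> G (a *: y + z) (a * b + c).
  move=> [s As gy] [t At gz]; have [u [Au gy' gz']] := common _ _ _ _ _ _ As At gy gz.
  by exists u => //; exact: graph_comb.
have G_functional y b c : G y b -> G y c -> b = c.
  move=> [s As gb] [t At gc]; have [u [_ gb' gc']] := common _ _ _ _ _ _ As At gb gc.
  exact: graph_functional gb' gc'.
have G_v : G v 1 by exists s0 => //; exact: graph_v.
by exists (PartialFunctional G_comb G_functional G_v) => s As y b gy; exists s.
Qed.

Lemma exists_functional_eq1 : exists2 f : V -> k, lin f & f v = 1.
Proof.
pose R s t := `[< pf_le s t >].
have [||| t t_max] := @ZL_preorder _ span_v_functional R.
- by move=> s; apply/asboolP.
- by move=> r s t /asboolP rs /asboolP st; apply/asboolP => x b /rs /st.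
- move=> A A_total; have [[s As]|A0] := pselect (exists s, A s); last first.
    by exists span_v_functional => s As; case: A0; exists s.
  have A_chain : total_on A pf_le.
    by move=> s' t As' At; have [/asboolP|/asboolP] := A_total s' t As' At; [left|right].
  have [t At] := pf_chain_ub A_chain (ex_intro _ s As).
  by exists t => s' /At /asboolP.
have t_total x : pf_dom t x.
  apply: contrapT => x_notin; have [s ts [b gs]] := pf_extend x_notin.
  by case: x_notin; exists b; move/asboolP: (t_max s (asboolT ts)); apply.
have [f graph_f] := choice t_total.
exists f; last exact: graph_functional (graph_f v) (graph_v t).
move=> a x y; apply: graph_functional (graph_f _) _.
exact: graph_comb (graph_f x) (graph_f y).
Qed.

End FunctionalExtension.

Lemma linear_functionals_separate (k : fieldType) (V : lmodType k) (x y : V) :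
  (forall g : V -> k, lin g -> g x = g y) -> x = y.
Proof.
move=> gxy; apply/eqP; rewrite -subr_eq0; apply/negPn/negP => /exists_functional_eq1 [g lg].
have -> : x - y = (-1) *: y + x by rewrite scaleN1r addrC.
by rewrite lg gxy // mulN1r addNr => /eqP; rewrite eq_sym oner_eq0.
Qed.

Section CoefficientMap.
Variables (k : fieldType) (C M : lmodType k).
Variables (Delta : C -> seq (C * C)) (eps : C -> k) (rho : M -> seq (M * C)).
Hypotheses (C_coalg : is_coalgebra Delta eps) (M_comod : is_rcomodule Delta eps rho).
Variables (f : M -> k) (lf : lin f).

Definition coef_map (m : M) : C := \sum_(p <- rho m) f p.1 *: p.2.

Lemma lin_coef_map g m : lin g -> g (coef_map m) = tev f g (rho m).
Proof. exact: lin_sum. Qed.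

Lemma coef_mapD x y : coef_map (x + y) = coef_map x + coef_map y.
Proof.
apply: linear_functionals_separate => g lg.
rewrite linD // !lin_coef_map //.
by have := comod_rho_lin M_comod 1 x y lf lg; rewrite scale1r mul1r.
Qed.

Lemma coef_map_ract h m : lin h -> coef_map (ract rho h m) = ract Delta h (coef_map m).
Proof.
move=> lh; apply: linear_functionals_separate => g lg.
have lin_tev_rho : lin (fun m => tev f g (rho m)).
  by move=> a x y; exact: (comod_rho_lin M_comod).
have lin_tev_Delta : lin (fun c => tev g h (Delta c)).
  by move=> a x y; exact: (coalg_Delta_lin C_coalg).
rewrite lin_coef_map // /ract (lin_sum _ _ _ lin_tev_rho) lin_sum //.
under [LHS]eq_bigr do rewrite mulrC.
under [RHS]eq_bigr do rewrite mulrC.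
rewrite -[RHS]/(tev g h (Delta (coef_map m))) (lin_coef_map _ lin_tev_Delta).
exact: (comod_coassoc M_comod lf lg lh).
Qed.

Lemma counit_coef_map m : eps (coef_map m) = f m.
Proof.
rewrite lin_sum; last exact: (coalg_eps_lin C_coalg).
rewrite -{2}(comod_counit M_comod m) lin_sum //.
by apply: eq_bigr => p _; rewrite mulrC.
Qed.

End CoefficientMap.

Lemma rsimple_hom_inj (k : fieldType) (C M : lmodType k) (Delta : C -> seq (C * C))
    (rho : M -> seq (M * C)) (psi : M -> C -> k) :
  rsimple rho ->
  (forall x y d, psi (x + y) d = psi x d + psi y d) ->
  (forall f m d, lin f -> psi (ract rho f m) d = conv Delta f (psi m) d) ->
  (exists m d, psi m d <> 0) ->
  forall m, (forall d, psi m d = 0) -> m = 0.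
Proof.
move=> [_ M_simple] psiD psi_ract [m0 [d0 psi_m0]].
pose kernel x := forall d, psi x d = 0.
have kernel_sub : rsubmodule rho kernel.
  split; first by move=> d; apply: (@additive0 _ _ (psi^~ d)) => x y; exact: psiD.
  split=> [x y kx ky d|f x lf kx d]; last first.
    by rewrite psi_ract // /conv big1 // => p _; rewrite kx mulr0.
  by have := psiD (x - y) y d; rewrite subrK kx ky addr0.
by case: (M_simple _ kernel_sub) => [//|/(_ m0 d0)].
Qed.

Theorem proposition4p2 (k : fieldType) (C : lmodType k)
  (Delta : C -> seq (C * C)) (eps : C -> k) :
  is_coalgebra Delta eps -> left_QcF Delta -> left_RatKasch Delta eps.
Proof.
move=> C_coalg [I [phi [phi_lin [phiD [phi_ract phi_inj]]]]] M rho M_comod M_simple.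
have [[m0 m0_neq0] _] := M_simple.
have [f lf fm0] := exists_functional_eq1 (introN eqP m0_neq0).
pose theta := coef_map rho f.
have theta_m0 : theta m0 <> 0.
  move=> theta0; have := counit_coef_map C_coalg M_comod lf m0.
  rewrite -/theta theta0 (lin0 (coalg_eps_lin C_coalg)) fm0.
  by move/eqP; rewrite eq_sym oner_eq0.
have [i [d0 phi_i]] : exists i d, phi (theta m0) i d <> 0.
  apply: contrapT => phi0; apply/theta_m0/phi_inj => i d.
  by apply: contrapT => ?; apply: phi0; exists i, d.
pose psi m := phi (theta m) i.
have psiD x y d : psi (x + y) d = psi x d + psi y d.
  by rewrite /psi /theta (coef_mapD M_comod lf) phiD.
have psi_ract h m d : lin h -> psi (ract rho h m) d = conv Delta h (psi m) d.
  by move=> lh; rewrite /psi /theta (coef_map_ract C_coalg M_comod lf) ?phi_ract.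
exists psi; split=> [m|]; first exact: phi_lin.
do 2!split=> //.
by apply: rsimple_hom_inj M_simple psiD psi_ract _; exists m0, d0.
Qed.
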